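(* Let $T\in\mathbb{N}$, let $\beta_1,\dots,\beta_T\in(0,1)$, set $\alpha_t=1-\beta_t$ and $\bar\alpha_t=\prod_{i=1}^t\alpha_i$, and let $\sigma_t\ge 0$ be such that $1-\bar\alpha_{t-1}-\sigma_t^2\ge 0$. Fix $t\in\{2,\dots,T\}$ and $\bm x_t\in\mathbb{R}^d$. For $\bm x_0\in\mathbb{R}^d$ let $$p(\bm x_{t-1}\mid \bm x_t,\bm x_0)=\mathcal{N}\Big(\bm x_{t-1};\ \sqrt{\bar\alpha_{t-1}}\,\bm x_0+\sqrt{1-\bar\alpha_{t-1}-\sigma_t^2}\,\tfrac{\bm x_t-\sqrt{\bar\alpha_t}\,\bm x_0}{\sqrt{1-\bar\alpha_t}},\ \sigma_t^2\mathbf{I}\Big).$$ Let the noise distribution be the Gaussian mixture $$p_\theta^\epsilon(\epsilon_t\mid \bm x_t)=\sum_{k=1}^K\pi_{\theta,k}\,\mathcal{N}\big(\epsilon_t;\bm\mu^\epsilon_{\theta,k}(\bm x_t,t),\bm\Sigma^\epsilon_{\theta,k}(\bm x_t,t)\big),$$ with $\pi_{\theta,k}\in[0,1]$, $\sum_k\pi_{\theta,k}=1$, means $\bm\mu^\epsilon_{\theta,k}(\bm x_t,t)\in\mathbb{R}^d$ and positive (semi-)definite covariances $\bm\Sigma^\epsilon_{\theta,k}(\bm x_t,t)$. Define the reverse distribution $$p_\theta(\bm x_{t-1}\mid\bm x_t)=\int_{\mathbb{R}^d} p\Big(\bm x_{t-1}\,\Big|\,\bm x_t,\ \bm x_0=\tfrac{\bm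 x_t-\sqrt{1-\bar\alpha_t}\,\epsilon_t}{\sqrt{\bar\alpha_t}}\Big)\,p_\theta^\epsilon(\epsilon_t\mid\bm x_t)\,d\epsilon_t .$$ Then $$p_\theta(\bm x_{t-1}\mid\bm x_t)=\sum_{k=1}^K\pi_{\theta,k}\,\mathcal{N}\Big(\bm x_{t-1};\ \sqrt{\bar\alpha_{t-1}}\,\hat{\bm x}_{0,k}+\lambda_t\,\bm\mu^\epsilon_{\theta,k}(\bm x_t,t),\ \gamma_t^2\,\bm\Sigma^\epsilon_{\theta,k}(\bm x_t,t)+\sigma_t^2\mathbf{I}\Big),$$ where $\hat{\bm x}_{0,k}=\frac{\bm x_t-\sqrt{1-\bar\alpha_t}\,\bm\mu^\epsilon_{\theta,k}(\bm x_t,t)}{\sqrt{\bar\alpha_t}}$, $\lambda_t=\sqrt{1-\bar\alpha_{t-1}-\sigma_t^2}$ and $\gamma_t=\lambda_t-\frac{\sqrt{1-\bar\alpha_t}}{\sqrt{\alpha_t}}$.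
   Context: This is the DDIM (denoising diffusion implicit model) framework: the forward noising satisfies $\bm x_t=\sqrt{\bar\alpha_t}\bm x_0+\sqrt{1-\bar\alpha_t}\,\epsilon_t$, so conditioning on $\bm x_0$ is equivalent to conditioning on the noise $\epsilon_t=(\bm x_t-\sqrt{\bar\alpha_t}\bm x_0)/\sqrt{1-\bar\alpha_t}$. The distribution $p_\theta^\epsilon(\cdot\mid\bm x_t)$ is a learned (neural-network-parametrized) model of the distribution of $\epsilon_t$ given $\bm x_t$. *)

From HB Require Import structures.
From mathcomp Require Import all_boot all_order all_algebra.
From mathcomp Require Import all_classical all_reals all_analysis.
Set Implicit Arguments. Unset Strict Implicit. Unset Printing Implicit Defensive.
Import Order.TTheory GRing.Theory Num.Theory.
Local Open Scope ring_scope.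

Section Defs.
Variable R : realType.

Definition posdef (d : nat) (S : 'M[R]_d) : Prop :=
  S^T = S /\ forall v : 'cV[R]_d, v != 0 -> 0 < (v^T *m S *m v) ord0 ord0.

Definition gauss_pdf (d : nat) (m : 'cV[R]_d) (S : 'M[R]_d) (x : 'cV[R]_d) : R :=
  (Num.sqrt ((2 * pi) ^+ d * \det S))^-1 *
  expR (- (((x - m)^T *m invmx S *m (x - m)) ord0 ord0) / 2).

(* Iterated Lebesgue integral over R^n of a function of n real coordinates,
   given as a function on sequences (only the first n entries are used). *)
Fixpoint iter_integral (n : nat) (f : seq R -> \bar R) : \bar R :=
  match n with
  | 0 => f [::]
  | n'.+1 => (\int[@lebesgue_measure R]_(x in [set: R])
                 iter_integral n' (fun s => f (x :: s)))%E
  end.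

(* Lebesgue integral over R^d (for nonnegative integrands, by Tonelli). *)
Definition integral_Rd (d : nat) (g : 'cV[R]_d -> \bar R) : \bar R :=
  iter_integral d (fun s => g (\col_(i < d) nth 0 s i)).

Definition alpha (beta : nat -> R) (i : nat) : R := 1 - beta i.
Definition alpha_bar (beta : nat -> R) (t : nat) : R :=
  \prod_(1 <= i < t.+1) alpha beta i.

Definition ddim_cond_pdf (d : nat) (beta : nat -> R) (sigma : R) (t : nat)
    (xt x0 xprev : 'cV[R]_d) : R :=
  gauss_pdf
    (Num.sqrt (alpha_bar beta t.-1) *: x0 +
     Num.sqrt (1 - alpha_bar beta t.-1 - sigma ^+ 2) *:
       ((Num.sqrt (1 - alpha_bar beta t))^-1 *:
          (xt - Num.sqrt (alpha_bar beta t) *: x0)))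
    (sigma ^+ 2 *: 1%:M) xprev.

Definition mixture_pdf (d K : nat) (pi_ : 'I_K -> R) (mu : 'I_K -> 'cV[R]_d)
    (Sig : 'I_K -> 'M[R]_d) (eps : 'cV[R]_d) : R :=
  \sum_(k < K) pi_ k * gauss_pdf (mu k) (Sig k) eps.

Definition reverse_pdf (d K : nat) (beta : nat -> R) (sigma : R) (t : nat)
    (pi_ : 'I_K -> R) (mu : 'I_K -> 'cV[R]_d) (Sig : 'I_K -> 'M[R]_d)
    (xt xprev : 'cV[R]_d) : \bar R :=
  integral_Rd (fun eps : 'cV[R]_d =>
    (ddim_cond_pdf beta sigma t xt
       ((Num.sqrt (alpha_bar beta t))^-1 *:
          (xt - Num.sqrt (1 - alpha_bar beta t) *: eps)) xprev
     * mixture_pdf pi_ mu Sig eps)%:E).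

End Defs.

From HB Require Import structures.
From mathcomp Require Import all_boot all_order all_algebra.
From mathcomp Require Import all_classical all_reals all_analysis.
From mathcomp Require Import measurable_realfun.
From mathcomp Require Import ring lra.
Set Implicit Arguments. Unset Strict Implicit. Unset Printing Implicit Defensive.
Import Order.TTheory GRing.Theory Num.Theory.
Local Open Scope ring_scope.

(* Substituting x_0 = (x_t - sqrt(1 - abar_t) eps) / sqrt(abar_t) makes the mean
   of p(x_{t-1} | x_t, x_0) affine in the noise: x_t / sqrt(alpha_t) + gamma_t eps.
   Each mixture component then contributes the marginal of a linear-Gaussian
   model: completing the square in eps writes N(x; a + g eps, sigma^2 I) N(eps; mu, S)
   as N(x; a + g mu, g^2 S + sigma^2 I) times an unnormalised Gaussian in eps with
   precision g^2/sigma^2 I + S^-1, whose integral cancels the remaining constant.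
   Integrals of Gaussian kernels over R^d are computed one coordinate at a time,
   splitting off the first coordinate with a Schur complement; the same Schur
   complement shows that positive definite matrices have positive determinant. *)

Section BilinearForm.
Variable R : realType.

Definition bform n (X : 'M[R]_n) (u v : 'cV[R]_n) : R := (u^T *m X *m v) ord0 ord0.

Lemma bformDl n (X : 'M[R]_n) u1 u2 v : bform X (u1 + u2) v = bform X u1 v + bform X u2 v.
Proof. by rewrite /bform linearD /= !mulmxDl mxE. Qed.

Lemma bformDr n (X : 'M[R]_n) u v1 v2 : bform X u (v1 + v2) = bform X u v1 + bform X u v2.
Proof. by rewrite /bform !mulmxDr mxE. Qed.

Lemma bformZl n (X : 'M[R]_n) c u v : bform X (c *: u) v = c * bform X u v.
Proof. by rewrite /bform linearZ /= -!scalemxAl mxE. Qed.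

Lemma bformZr n (X : 'M[R]_n) c u v : bform X u (c *: v) = c * bform X u v.
Proof. by rewrite /bform -!scalemxAr mxE. Qed.

Lemma bformBl n (X : 'M[R]_n) u1 u2 v : bform X (u1 - u2) v = bform X u1 v - bform X u2 v.
Proof. by rewrite -scaleN1r bformDl bformZl mulN1r. Qed.

Lemma bformBr n (X : 'M[R]_n) u v1 v2 : bform X u (v1 - v2) = bform X u v1 - bform X u v2.
Proof. by rewrite -scaleN1r bformDr bformZr mulN1r. Qed.

Lemma bformDX n (X Y : 'M[R]_n) u v : bform (X + Y) u v = bform X u v + bform Y u v.
Proof. by rewrite /bform mulmxDr mulmxDl mxE. Qed.

Lemma bformZX n (X : 'M[R]_n) c u v : bform (c *: X) u v = c * bform X u v.
Proof. by rewrite /bform -scalemxAr -scalemxAl mxE. Qed.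

Lemma bform_mulmx n (X Y : 'M[R]_n) u v : bform (X *m Y) u v = bform X u (Y *m v).
Proof. by rewrite /bform !mulmxA. Qed.

Lemma bform_sym n (X : 'M[R]_n) u v : X^T = X -> bform X u v = bform X v u.
Proof.
move=> hX; rewrite /bform -[in LHS](trmxK (u^T *m X *m v)) [in LHS]mxE.
by rewrite !trmx_mul trmxK hX mulmxA.
Qed.

Lemma bform_scalar n (a : R) (u v : 'cV[R]_n) : bform a%:M u v = a * bform 1%:M u v.
Proof. by rewrite -[a%:M]scalemx1 bformZX. Qed.

Lemma bform1_ge0 n (v : 'cV[R]_n) : 0 <= bform 1%:M v v.
Proof.
rewrite /bform mulmx1 mxE; apply: sumr_ge0 => j _.
by rewrite mxE -expr2 sqr_ge0.
Qed.

Lemma posdef_bform_gt0 n (A : 'M[R]_n) v : posdef A -> v != 0 -> 0 < bform A v v.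
Proof. by case=> _; apply. Qed.

End BilinearForm.

Section PositiveDefinite.
Variable R : realType.

Definition schur_z n (A : 'M[R]_(1 + n)) := invmx (drsubmx A) *m dlsubmx A.
Definition schur_d n (A : 'M[R]_(1 + n)) :=
  (ulsubmx A - (dlsubmx A)^T *m schur_z A) ord0 ord0.

Lemma bform_col_mx n (A : 'M[R]_(1 + n)) (z : 'cV[R]_n) (p : 'cV[R]_1) (w : 'cV[R]_n) :
  A^T = A -> drsubmx A *m z = dlsubmx A ->
  bform A (col_mx p w) (col_mx p w) =
  bform (drsubmx A) (w + z *m p) (w + z *m p) +
  (ulsubmx A - (dlsubmx A)^T *m z) ord0 ord0 * (p ord0 ord0) ^+ 2.
Proof.
move=> hs hz.
have hD : (drsubmx A)^T = drsubmx A by rewrite trmx_drsub hs.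
have hB : ursubmx A = (dlsubmx A)^T by rewrite trmx_dlsub hs.
set a := ulsubmx A; set c := dlsubmx A; set D := drsubmx A.
rewrite -[A in LHS]submxK -/a -/c -/D hB [p]mx11_scalar; set y := p ord0 ord0.
rewrite mul_mx_scalar !bformDl !bformDr !bformZl !bformZr.
have tr11 (u v : 'cV[R]_n) : (u^T *m v) ord0 ord0 = (v^T *m u) ord0 ord0.
  by rewrite -[in LHS](trmxK (u^T *m v)) [in LHS]mxE trmx_mul trmxK.
have e1 : bform D w z = (w^T *m c) ord0 ord0 by rewrite /bform -mulmxA hz.
have e2 : bform D z w = (w^T *m c) ord0 ord0 by rewrite bform_sym.
have e3 : bform D z z = (c^T *m z) ord0 ord0 by rewrite /bform -mulmxA hz tr11.
rewrite e1 e2 e3 /bform tr_col_mx mul_row_block mul_row_col tr_scalar_mx.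
rewrite !mul_scalar_mx !mul_mx_scalar -/c !mulmxDl -!scalemxAl !mxE.
have -> : \sum_j c^T ord0 j * w j ord0 = \sum_j w^T ord0 j * c j ord0.
  by apply: eq_bigr => j _; rewrite !mxE mulrC.
rewrite eqxx mulr1n; ring.
Qed.

Lemma det_block_schur n (A : 'M[R]_(1 + n)) (z : 'cV[R]_n) :
  A^T = A -> drsubmx A *m z = dlsubmx A ->
  \det A = (ulsubmx A - (dlsubmx A)^T *m z) ord0 ord0 * \det (drsubmx A).
Proof.
move=> hs hz.
have hD : (drsubmx A)^T = drsubmx A by rewrite trmx_drsub hs.
have hB : ursubmx A = (dlsubmx A)^T by rewrite trmx_dlsub hs.
set a := ulsubmx A; set c := dlsubmx A; set D := drsubmx A.
have tr1 (M : 'M[R]_1) : M^T = M by rewrite [M]mx11_scalar tr_scalar_mx.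
have -> : A = block_mx 1%:M z^T 0 1%:M *m block_mx (a - c^T *m z) 0 c D.
  rewrite mulmx_block !mul1mx !mul0mx !add0r.
  have -> : z^T *m D = c^T by rewrite -[D in LHS]trmxK -trmx_mul hD hz.
  have -> : z^T *m c = c^T *m z by rewrite -[z^T *m c]tr1 trmx_mul trmxK.
  by rewrite subrK /a /c /D -hB submxK.
by rewrite det_mulmx det_ublock det_lblock !det1 !mul1r det_mx11.
Qed.

Lemma posdef_unitmx n (A : 'M[R]_n) : posdef A -> A \in unitmx.
Proof.
move=> hA; rewrite unitmxE unitfE; apply/negP => /det0P [v nz vA].
have := posdef_bform_gt0 hA (_ : v^T != 0); rewrite trmx_eq0 => /(_ nz).
by rewrite /bform trmxK vA mul0mx mxE ltxx.
Qed.

Lemma posdef_drsubmx n (A : 'M[R]_(1 + n)) : posdef A -> posdef (drsubmx A).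
Proof.
move=> [hs hp]; split; first by rewrite trmx_drsub hs.
move=> v nz.
have hv : col_mx 0 v != 0 :> 'cV[R]_(1 + n) by rewrite col_mx_eq0 negb_and nz orbT.
have := hp _ hv.
rewrite -[A in X in _ < X -> _]submxK tr_col_mx trmx0 mul_row_block mul_row_col.
by rewrite !mul0mx !add0r mulmx0 add0r.
Qed.

Lemma posdef_invmx n (S : 'M[R]_n) : posdef S -> posdef (invmx S).
Proof.
move=> hS; have Su := posdef_unitmx hS.
have Pt : (invmx S)^T = invmx S by rewrite trmx_inv hS.1.
split=> // v nz; change (0 < bform (invmx S) v v).
have -> : bform (invmx S) v v = bform S (invmx S *m v) (invmx S *m v).
  rewrite -bform_mulmx mulmxV // bform_sym ?tr_scalar_mx //.
  by rewrite -bform_mulmx mul1mx.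
apply: posdef_bform_gt0 => //; apply: contra nz => /eqP h.
by rewrite -[v]mul1mx -(mulmxV Su) -mulmxA h mulmx0.
Qed.

Lemma posdef_scalar_addmx n (c : R) (P : 'M[R]_n) :
  0 <= c -> posdef P -> posdef (c *: 1%:M + P).
Proof.
move=> c0 hP; split.
  by rewrite linearD /= linearZ /= tr_scalar_mx hP.1.
move=> v nz; change (0 < bform (c *: 1%:M + P) v v).
rewrite bformDX bformZX.
by rewrite ltr_wpDl ?mulr_ge0 ?bform1_ge0 ?posdef_bform_gt0.
Qed.

Lemma schur_zP n (A : 'M[R]_(1 + n)) : posdef A -> drsubmx A *m schur_z A = dlsubmx A.
Proof.
move=> hA; rewrite /schur_z mulmxA mulmxV ?mul1mx //.
exact/posdef_unitmx/posdef_drsubmx.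
Qed.

Lemma schur_d_gt0 n (A : 'M[R]_(1 + n)) : posdef A -> 0 < schur_d A.
Proof.
move=> hA.
have h1 : (1%:M : 'cV[R]_1) != 0.
  by apply/eqP => /matrixP/(_ ord0 ord0); rewrite !mxE /= => /eqP; rewrite oner_eq0.
have hv : col_mx 1%:M (- schur_z A) != 0 :> 'cV[R]_(1 + n).
  by rewrite col_mx_eq0 negb_and h1.
have := posdef_bform_gt0 hA hv.
rewrite (bform_col_mx _ _ hA.1 (schur_zP hA)) mulmx1 addNr /bform mulmx0 mxE add0r.
by rewrite [_ ord0 ord0 in X in _ * X]mxE expr1n mulr1.
Qed.

Lemma posdef_det_gt0 n (A : 'M[R]_n) : posdef A -> 0 < \det A.
Proof.
elim: n A => [|n IH] A hA; first by rewrite det_mx00.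
have hA' : posdef (A : 'M[R]_(1 + n)) by [].
rewrite (det_block_schur hA'.1 (schur_zP hA')).
by rewrite mulr_gt0 ?schur_d_gt0 ?IH //; exact: posdef_drsubmx.
Qed.

End PositiveDefinite.

Section GaussianIntegral.
Variable R : realType.
Local Notation lebesgue := (@lebesgue_measure R).

Definition gauss_kernel n (A : 'M[R]_n) (m v : 'cV[R]_n) : R :=
  expR (- bform A (v - m) (v - m) / 2).

Lemma gauss_pdfE d (m : 'cV[R]_d) (S : 'M[R]_d) x :
  gauss_pdf m S x = (Num.sqrt ((2 * pi) ^+ d * \det S))^-1 * gauss_kernel (invmx S) m x.
Proof. by []. Qed.

Lemma gauss_pdf_ge0 d (m : 'cV[R]_d) (S : 'M[R]_d) x : 0 <= gauss_pdf m S x.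
Proof. by rewrite gauss_pdfE mulr_ge0 ?invr_ge0 ?sqrtr_ge0 ?expR_ge0. Qed.

Lemma gauss_kernel_col_mx n (A : 'M[R]_(1 + n)) (m : 'cV[R]_(1 + n)) x v :
  posdef A ->
  gauss_kernel A m (col_mx x%:M v) =
  expR (- (schur_d A * (x - usubmx m ord0 ord0) ^+ 2) / 2) *
  gauss_kernel (drsubmx A) (dsubmx m - schur_z A *m (x%:M - usubmx m)) v.
Proof.
move=> hA; rewrite /gauss_kernel -[m in LHS](@vsubmxK _ 1 n 1).
rewrite (@opp_col_mx _ 1 n 1) (@add_col_mx _ 1 n 1).
rewrite (bform_col_mx _ _ hA.1 (schur_zP hA)) opprB addrA addrAC.
have -> : (x%:M - usubmx m) ord0 ord0 = x - usubmx m ord0 ord0.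
  by rewrite !mxE eqxx mulr1n.
by rewrite -expRD /schur_d; congr expR; lra.
Qed.

Definition col_seq n (s : seq R) : 'cV[R]_n := \col_(i < n) nth 0 s i.

Lemma col_seq_cons n x s :
  col_seq n.+1 (x :: s) = col_mx (x%:M) (col_seq n s) :> 'cV[R]_(1 + n).
Proof.
apply/matrixP => i j; rewrite !mxE; case: splitP => k hk; rewrite !mxE.
  by rewrite hk (ord1 k) (ord1 j) /= mulr1n.
by rewrite hk.
Qed.

Lemma measurable_gauss_kernel1 (C d m : R) :
  measurable_fun [set: R] (fun x => (C * expR (- (d * (x - m) ^+ 2) / 2))%:E).
Proof.
apply/measurable_EFinP; apply: measurable_funM => //.
apply: measurableT_comp => //; apply: measurable_funM => //.
apply: measurableT_comp => //; apply: measurable_funM => //.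
exact/measurable_funX/measurable_funB.
Qed.

Lemma integral_gauss_kernel1 (C d m : R) : 0 <= C -> 0 < d ->
  (\int[lebesgue]_(x in [set: R]) (C * expR (- (d * (x - m) ^+ 2) / 2))%:E =
   (C * Num.sqrt (2 * pi / d))%:E)%E.
Proof.
move=> C0 d0; set s := Num.sqrt d^-1.
have s2 : s ^+ 2 = d^-1 by rewrite sqr_sqrtr // invr_ge0 ltW.
have s0 : s != 0 by rewrite gt_eqF // sqrtr_gt0 invr_gt0.
have pk0 : 0 < normal_peak s := normal_peak_gt0 s0.
have hint := integral_normal_pdf m s; rewrite normal_pdfE // in hint.
have hf x : C * expR (- (d * (x - m) ^+ 2) / 2) =
    (C / normal_peak s) * (normal_peak s * normal_fun m s x).
  rewrite /normal_fun s2 [RHS]mulrA divfK ?gt_eqF //; congr (C * expR _).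
  by rewrite -mulr_natr; field; rewrite gt_eqF.
under eq_integral do rewrite hf EFinM.
rewrite ge0_integralZl //=; last 3 first.
- apply/measurable_EFinP/measurable_funM => //; exact: measurable_normal_fun.
- by move=> x _; rewrite lee_fin mulr_ge0 // ?normal_peak_ge0 ?normal_fun_ge0.
- by rewrite lee_fin divr_ge0 // ltW.
rewrite hint mule1 /normal_peak invrK s2 -mulr_natr.
by congr (C * Num.sqrt _)%:E; field; rewrite gt_eqF.
Qed.

Lemma iter_integral_gauss_kernel_sum n K (c : 'I_K -> R) (A : 'I_K -> 'M[R]_n)
    (m : 'I_K -> 'cV[R]_n) :
  (forall k, 0 <= c k) -> (forall k, posdef (A k)) ->
  iter_integral n (fun s => (\sum_(k < K) c k * gauss_kernel (A k) (m k) (col_seq n s))%:E) =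
  (\sum_(k < K) c k * Num.sqrt ((2 * pi) ^+ n / \det (A k)))%:E.
Proof.
elim: n K c A m => [|n IH] K c A m c0 hA.
  congr (_%:E); apply: eq_bigr => k _.
  by rewrite /gauss_kernel /bform mxE big_ord0 oppr0 mul0r expR0 det_mx00 divr1 sqrtr1.
pose A1 k : 'M[R]_(1 + n) := A k; pose m1 k : 'cV[R]_(1 + n) := m k.
pose c' k := c k * Num.sqrt ((2 * pi) ^+ n / \det (drsubmx (A1 k))).
have hA1 k : posdef (A1 k) := hA k.
have c'0 k : 0 <= c' k by rewrite mulr_ge0 ?sqrtr_ge0.
transitivity (\int[lebesgue]_(x in [set: R]) (\sum_(k < K)
    c' k * expR (- (schur_d (A1 k) * (x - usubmx (m1 k) ord0 ord0) ^+ 2) / 2))%:E)%E.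
  rewrite [LHS]/=; apply: eq_integral => x _.
  under eq_fun do under eq_bigr do
    rewrite col_seq_cons (gauss_kernel_col_mx _ _ _ (hA1 _)) mulrA.
  rewrite IH => [|k|k].
  - by congr (_%:E); apply: eq_bigr => k _; rewrite /c'; ring.
  - by rewrite mulr_ge0 ?expR_ge0.
  - exact: posdef_drsubmx.
under eq_integral do rewrite -sumEFin.
rewrite ge0_integral_sum //; last 2 first.
- by move=> k; exact: measurable_gauss_kernel1.
- by move=> k x _; rewrite lee_fin mulr_ge0 ?expR_ge0.
under eq_bigr do rewrite integral_gauss_kernel1 ?schur_d_gt0 //.
rewrite sumEFin; congr (_%:E); apply: eq_bigr => k _.
have hd' : 0 < \det (drsubmx (A1 k)) by apply/posdef_det_gt0/posdef_drsubmx.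
have hd : 0 < schur_d (A1 k) by apply: schur_d_gt0.
rewrite [\det (A k)](det_block_schur (hA1 k).1 (schur_zP (hA1 k))) -/(schur_d _).
rewrite /c' -mulrA -sqrtrM ?divr_ge0 ?exprn_ge0 ?mulr_ge0 ?pi_ge0 ?ltW // exprS.
by congr (c k * Num.sqrt _); field; rewrite !gt_eqF.
Qed.

Lemma integral_Rd_gauss_kernel_sum n K (c : 'I_K -> R) (A : 'I_K -> 'M[R]_n)
    (m : 'I_K -> 'cV[R]_n) :
  (forall k, 0 <= c k) -> (forall k, posdef (A k)) ->
  integral_Rd (fun v => (\sum_(k < K) c k * gauss_kernel (A k) (m k) v)%:E) =
  (\sum_(k < K) c k * Num.sqrt ((2 * pi) ^+ n / \det (A k)))%:E.
Proof. exact: iter_integral_gauss_kernel_sum. Qed.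

End GaussianIntegral.

Section LinearGaussian.
Variable R : realType.
Variables (d : nat) (S : 'M[R]_d) (g sg : R).
Hypotheses (hS : posdef S) (sg_gt0 : 0 < sg).

(* In the model eps ~ N(mu, S), x | eps ~ N(a + g eps, sg^2 I), [A] is the
   precision of eps given x and [M] the covariance of x. *)
Let A := (g ^+ 2 / sg ^+ 2) *: 1%:M + invmx S.
Let M := g ^+ 2 *: S + sg ^+ 2 *: 1%:M.
Let N := invmx M.

Let sg2_neq0 : sg ^+ 2 != 0. Proof. by rewrite gt_eqF ?exprn_gt0. Qed.

Lemma posdef_precision : posdef A.
Proof.
by apply: posdef_scalar_addmx; [rewrite divr_ge0 ?sqr_ge0 | exact: posdef_invmx].
Qed.

Lemma precision_mulmx : A *m S = (sg ^+ 2)^-1 *: M.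
Proof.
rewrite /A /M mulmxDl mulVmx ?posdef_unitmx // -scalemxAl mul1mx scalerDr scalerA.
by rewrite mulrC (mulrC (_ ^-1)) scalerA mulVf // scale1r.
Qed.

Lemma det_marginal_cov : \det M = (sg ^+ 2) ^+ d * (\det A * \det S).
Proof.
have -> : M = sg ^+ 2 *: (A *m S) by rewrite precision_mulmx scalerA divff // scale1r.
by rewrite detZ det_mulmx.
Qed.

Lemma marginal_cov_unitmx : M \in unitmx.
Proof.
rewrite unitmxE unitfE det_marginal_cov gt_eqF //.
by rewrite !mulr_gt0 ?exprn_gt0 ?posdef_det_gt0 //; exact: posdef_precision.
Qed.

Lemma bform_complete_square (w u : 'cV[R]_d) :
  bform (sg ^+ 2)^-1%:M (w - g *: u) (w - g *: u) + bform (invmx S) u u =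
  bform A (u - g *: (S *m (N *m w))) (u - g *: (S *m (N *m w))) + bform N w w.
Proof.
have ASN : A *m S *m N = (sg ^+ 2)^-1 *: 1%:M.
  by rewrite precision_mulmx -scalemxAl mulmxV // marginal_cov_unitmx.
have At : A^T = A by case: posdef_precision.
set y := S *m (N *m w).
have e1 : bform A u y = (sg ^+ 2)^-1 * bform 1%:M u w.
  by rewrite /y -!bform_mulmx ASN bformZX.
have e2 : bform A y u = (sg ^+ 2)^-1 * bform 1%:M u w by rewrite bform_sym.
have e3 : bform A y y = (sg ^+ 2)^-1 * bform (S *m N) w w.
  rewrite {2}/y -!bform_mulmx ASN bformZX bform_sym ?tr_scalar_mx //.
  by rewrite /y mulmxA -bform_mulmx mul1mx.
have e4 : bform N w w =
    (sg ^+ 2)^-1 * bform 1%:M w w - g ^+ 2 * ((sg ^+ 2)^-1 * bform (S *m N) w w).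
  apply/eqP; rewrite eq_sym subr_eq -!bformZX -bformDX; apply/eqP.
  congr (bform _ w w); rewrite -[in LHS](mulmxV marginal_cov_unitmx) mulmxDl.
  by rewrite -!scalemxAl mul1mx scalerDr !scalerA mulVf // scale1r mulrC addrC.
rewrite bform_scalar !bformBl !bformBr !bformZl !bformZr e1 e2 e3 e4.
rewrite [bform 1%:M w u]bform_sym ?tr_scalar_mx // /A bformDX bformZX.
by field; rewrite gt_eqF.
Qed.

Lemma gauss_pdf_linear_mul (a x e mu : 'cV[R]_d) :
  gauss_pdf (a + g *: e) (sg ^+ 2 *: 1%:M) x * gauss_pdf mu S e =
  gauss_pdf (a + g *: mu) M x / Num.sqrt ((2 * pi) ^+ d / \det A) *
  gauss_kernel A (mu + g *: (S *m (N *m (x - (a + g *: mu))))) e.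
Proof.
rewrite !gauss_pdfE /gauss_kernel scalemx1 invmx_scalar det_scalar det_marginal_cov.
set w := x - (a + g *: mu).
have -> : x - (a + g *: e) = w - g *: (e - mu).
  by apply/matrixP => i j; rewrite !mxE; ring.
rewrite opprD addrA.
have hexp := bform_complete_square w (e - mu).
have -> : expR (- bform (sg ^+ 2)^-1%:M (w - g *: (e - mu)) (w - g *: (e - mu)) / 2) =
    expR (- bform N w w / 2) * expR (- bform A (e - mu - g *: (S *m (N *m w)))
      (e - mu - g *: (S *m (N *m w))) / 2) / expR (- bform (invmx S) (e - mu) (e - mu) / 2).
  by rewrite -expRD -expRB; congr expR; lra.
have hX : 0 < (2 * pi : R) ^+ d by rewrite exprn_gt0 ?mulr_gt0 ?pi_gt0.
have hsg : 0 < (sg ^+ 2) ^+ d by rewrite !exprn_gt0.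
have hA : 0 < \det A := posdef_det_gt0 posdef_precision.
have hdS : 0 < \det S := posdef_det_gt0 hS.
rewrite !sqrtrM ?mulr_ge0 ?ltW // sqrtrV ?ltW //.
field; rewrite !gt_eqF ?sqrtr_gt0 ?expR_gt0 //.
Qed.

End LinearGaussian.

Lemma integral_Rd_gauss_mixture_linear (R : realType) d K (w : 'I_K -> R)
    (mu : 'I_K -> 'cV[R]_d) (Sig : 'I_K -> 'M[R]_d) (a x : 'cV[R]_d) (g sg : R) :
  0 < sg -> (forall k, 0 <= w k) -> (forall k, posdef (Sig k)) ->
  integral_Rd (fun e =>
    (gauss_pdf (a + g *: e) (sg ^+ 2 *: 1%:M) x * mixture_pdf w mu Sig e)%:E) =
  (\sum_(k < K) w k * gauss_pdf (a + g *: mu k) (g ^+ 2 *: Sig k + sg ^+ 2 *: 1%:M) x)%:E.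
Proof.
move=> sg0 w0 hSig.
pose A k := (g ^+ 2 / sg ^+ 2) *: 1%:M + invmx (Sig k).
pose N k := invmx (g ^+ 2 *: Sig k + sg ^+ 2 *: 1%:M).
pose m k := mu k + g *: (Sig k *m (N k *m (x - (a + g *: mu k)))).
pose kappa k := Num.sqrt ((2 * pi) ^+ d / \det (A k)).
pose c k := w k * gauss_pdf (a + g *: mu k) (g ^+ 2 *: Sig k + sg ^+ 2 *: 1%:M) x / kappa k.
have hA k : posdef (A k) := posdef_precision g sg (hSig k).
have kappa_gt0 k : 0 < kappa k.
  by rewrite sqrtr_gt0 divr_gt0 ?exprn_gt0 ?mulr_gt0 ?pi_gt0 ?posdef_det_gt0.
rewrite (_ : (fun e => _) = fun e => (\sum_(k < K) c k * gauss_kernel (A k) (m k) e)%:E).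
  rewrite integral_Rd_gauss_kernel_sum => [|k|//]; last first.
    by rewrite /c divr_ge0 ?mulr_ge0 ?gauss_pdf_ge0 // ltW.
  by congr (_%:E); apply: eq_bigr => k _; rewrite divfK ?gt_eqF.
apply/funext => e; rewrite /mixture_pdf mulr_sumr; congr (_%:E).
apply: eq_bigr => k _.
by rewrite mulrCA gauss_pdf_linear_mul // /c !mulrA.
Qed.

Section Schedule.
Variables (R : realType) (T : nat) (beta : nat -> R).
Hypothesis beta01 : forall i, (1 <= i <= T)%N -> 0 < beta i < 1.

Lemma alpha_barS j : alpha_bar beta j.+1 = alpha_bar beta j * alpha beta j.+1.
Proof. by rewrite /alpha_bar big_nat_recr. Qed.

Lemma alpha_gt0 i : (1 <= i <= T)%N -> 0 < alpha beta i.
Proof. by move=> /beta01 /andP[_ b1]; rewrite /alpha subr_gt0. Qed.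

Lemma alpha_lt1 i : (1 <= i <= T)%N -> alpha beta i < 1.
Proof. by move=> /beta01 /andP[b0 _]; rewrite /alpha ltrBlDr ltrDl. Qed.

Lemma alpha_bar_gt0_le1 j : (j <= T)%N -> 0 < alpha_bar beta j <= 1.
Proof.
elim: j => [|j IH] hj; first by rewrite /alpha_bar big_geq // ltr01 lexx.
have /andP[ab0 ab1] := IH (ltnW hj).
have hj1 : (1 <= j.+1 <= T)%N by [].
have a0 := alpha_gt0 hj1; have a1 := alpha_lt1 hj1.
rewrite alpha_barS mulr_gt0 //=; apply: (le_trans _ ab1).
by rewrite ler_piMr // ltW.
Qed.

Lemma alpha_bar_lt1 j : (0 < j <= T)%N -> alpha_bar beta j < 1.
Proof.
case: j => // j hj.
have /andP[ab0 ab1] := alpha_bar_gt0_le1 (ltnW hj).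
rewrite alpha_barS (le_lt_trans _ (alpha_lt1 hj)) //.
by rewrite ler_piMl // ltW ?alpha_gt0.
Qed.

Lemma sqrt_alpha_bar_pred j : (0 < j <= T)%N ->
  Num.sqrt (alpha_bar beta j.-1) / Num.sqrt (alpha_bar beta j) = (Num.sqrt (alpha beta j))^-1.
Proof.
case: j => // j hj.
have /andP[ab0 _] := alpha_bar_gt0_le1 (ltnW hj).
rewrite alpha_barS sqrtrM ?ltW // invfM mulrA divff ?mul1r //.
by rewrite gt_eqF ?sqrtr_gt0.
Qed.

End Schedule.

Unset Implicit Arguments.

Theorem theorem1 (R : realType) (T d K : nat) (beta : nat -> R) (sigma : R)
    (t : nat) (xt : 'cV[R]_d)
    (pi_ : 'I_K -> R) (mu : 'I_K -> 'cV[R]_d) (Sig : 'I_K -> 'M[R]_d) :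
  (forall i, (1 <= i <= T)%N -> 0 < beta i < 1) ->
  0 < sigma ->
  0 <= 1 - alpha_bar beta t.-1 - sigma ^+ 2 ->
  (2 <= t <= T)%N ->
  (forall k, 0 <= pi_ k <= 1) ->
  \sum_(k < K) pi_ k = 1 ->
  (forall k, posdef (Sig k)) ->
  forall xprev : 'cV[R]_d,
    reverse_pdf beta sigma t pi_ mu Sig xt xprev =
    (\sum_(k < K) pi_ k *
       gauss_pdf
         (Num.sqrt (alpha_bar beta t.-1) *:
            ((Num.sqrt (alpha_bar beta t))^-1 *:
               (xt - Num.sqrt (1 - alpha_bar beta t) *: mu k))
          + Num.sqrt (1 - alpha_bar beta t.-1 - sigma ^+ 2) *: mu k)
         ((Num.sqrt (1 - alpha_bar beta t.-1 - sigma ^+ 2)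
             - Num.sqrt (1 - alpha_bar beta t) / Num.sqrt (alpha beta t)) ^+ 2
            *: Sig k + sigma ^+ 2 *: 1%:M)
         xprev)%:E.
Proof.
move=> beta01 sigma_gt0 _ /andP[t2 tT] pi01 _ hSig xprev.
have ht : (0 < t <= T)%N by rewrite tT (leq_trans _ t2).
have r0 : 0 < Num.sqrt (alpha_bar beta t).
  by rewrite sqrtr_gt0; case/andP: (alpha_bar_gt0_le1 beta01 tT).
have s0 : 0 < Num.sqrt (1 - alpha_bar beta t).
  by rewrite sqrtr_gt0 subr_gt0 (alpha_bar_lt1 beta01 ht).
have hc := sqrt_alpha_bar_pred beta01 ht.
rewrite /reverse_pdf /ddim_cond_pdf.
set r := Num.sqrt (alpha_bar beta t) in r0 hc *.
set s := Num.sqrt (1 - alpha_bar beta t) in s0 *.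
set lam := Num.sqrt (1 - alpha_bar beta t.-1 - sigma ^+ 2).
set g := lam - s / Num.sqrt (alpha beta t).
have mean_eps e : Num.sqrt (alpha_bar beta t.-1) *: (r^-1 *: (xt - s *: e)) +
    lam *: (s^-1 *: (xt - r *: (r^-1 *: (xt - s *: e)))) =
    (Num.sqrt (alpha beta t))^-1 *: xt + g *: e.
  by apply/matrixP => i j; rewrite !mxE /g -hc; field; rewrite !gt_eqF.
have mean_mu k : Num.sqrt (alpha_bar beta t.-1) *: (r^-1 *: (xt - s *: mu k)) +
    lam *: mu k = (Num.sqrt (alpha beta t))^-1 *: xt + g *: mu k.
  by apply/matrixP => i j; rewrite !mxE /g -hc; field; rewrite gt_eqF.
under eq_fun do rewrite mean_eps.
rewrite integral_Rd_gauss_mixture_linear // => [|k]; last by case/andP: (pi01 k).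
by congr (_%:E); apply: eq_bigr => k _; rewrite mean_mu.
Qed.
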